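(* For any finite multiset $C$ of vectors in $\mathbb{Z}^d$, a vector $c\in\mathbb{R}^d$ minimizing $\sum_{x\in C}\operatorname{dist}_\infty(x,c)$ can always be chosen from $\frac{1}{2}\mathbb{Z}^d$, i.e., with every coordinate an integer or a half-integer.
   Context: $\operatorname{dist}_\infty(x,y)=\max_{1\le i\le d}|x[i]-y[i]|$. *)

From HB Require Import structures.
From mathcomp Require Import all_boot all_order all_algebra.
From mathcomp Require Import reals.
Set Implicit Arguments. Unset Strict Implicit. Unset Printing Implicit Defensive.
Import Order.TTheory GRing.Theory Num.Theory.
Local Open Scope ring_scope.

Definition dist_inf (R : realType) (d : nat) (x y : 'I_d -> R) : R :=
  \big[Num.max/0]_(i < d) `|x i - y i|.

Definition intvec (R : realType) (d : nat) (x : 'I_d -> int) : 'I_d -> R :=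
  fun i => (x i)%:~R.

(* sum over the multiset C (a list, repetitions counted) of dist_inf(x, c) *)
Definition cost (R : realType) (d : nat) (C : seq ('I_d -> int)) (c : 'I_d -> R) : R :=
  \sum_(x <- C) dist_inf (intvec R x) c.

Definition half_integral (R : realType) (d : nat) (c : 'I_d -> R) : Prop :=
  forall i : 'I_d, exists k : int, c i = k%:~R / 2.

From HB Require Import structures.
From mathcomp Require Import all_boot all_order all_algebra.
From mathcomp Require Import reals.
From mathcomp Require Import ring lra zify.
Import Order.TTheory GRing.Theory Num.Theory.
Local Open Scope ring_scope.

(* Every quantity |x_i - c_i| entering the cost, with x_i an integer, lies at the same
   distance from Z as c_i.  Dilating every coordinate of c by a common factor l towards
   its nearest integer (half-integers stay fixed) is monotone and commutes with x - _,
   |_| and max as long as no coordinate is pushed past a half-integer; hence the cost of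
   the dilated point is affine in l.  Comparing l = 0 with the largest admissible
   l >= 1, one of them does not increase the cost, and it turns the coordinates farthest
   from Z into integers or half-integers; finitely many such steps reach a half-integral
   point.  Clamping to a box containing C does not increase the cost either, so a minimum
   over the finitely many half-integral points of the box is a global minimum. *)

Section NearestInteger.
Context {R : realType}.
Implicit Types (l a b s t : R) (m n : int).

Definition nearest_int a : int := Num.floor (a + 2^-1).

Definition dist_int a : R := `|a - (nearest_int a)%:~R|.

Lemma nearest_intE m s : - 2^-1 <= s < 2^-1 -> nearest_int (m%:~R + s) = m.
Proof.
move=> /andP[s_ge s_lt]; apply: floor_def; rewrite intrD; apply/andP; split; lra.
Qed.

Lemma nearest_decomp a : exists m (s : R), - 2^-1 <= s < 2^-1 /\ a = m%:~R + s.
Proof.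
exists (nearest_int a), (a - (nearest_int a)%:~R); split; last lra.
have /andP[] := floor_itv (a + 2^-1); rewrite -/(nearest_int a) intrD => lo hi.
apply/andP; split; lra.
Qed.

Lemma norm_le_half {s} : - 2^-1 <= s < 2^-1 -> `|s| <= 2^-1.
Proof. by move=> /andP[s_ge s_lt]; rewrite ler_norml; apply/andP; split; lra. Qed.

Lemma dist_intE m s : `|s| <= 2^-1 -> dist_int (m%:~R + s) = `|s|.
Proof.
move=> s_le; have [->|s_neq] := eqVneq s 2^-1.
  have -> : m%:~R + 2^-1 = (m + 1)%:~R + - 2^-1 :> R by rewrite intrD; lra.
  rewrite /dist_int nearest_intE; last by apply/andP; split; lra.
  by rewrite addrAC subrr add0r normrN.
have s_itv : - 2^-1 <= s < 2^-1.
  by move: s_le s_neq; rewrite ler_norml => /andP[? ?] /eqP ?; apply/andP; split; lra.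
by rewrite /dist_int nearest_intE // addrAC subrr add0r.
Qed.

Definition anchor a : R := if dist_int a == 2^-1 then a else (nearest_int a)%:~R.

(* Since [nearest_int] rounds halves up, fixing the half-integers is what makes
   [dilate l] odd (see [dilateN]). *)
Definition dilate (l a : R) : R := anchor a + l * (a - anchor a).

Definition dilatable (l a : R) : Prop := dist_int a < 2^-1 -> l * dist_int a <= 2^-1.

Lemma dist_int_le_half a : dist_int a <= 2^-1.
Proof.
by have [m [s [s_itv ->]]] := nearest_decomp a; rewrite dist_intE norm_le_half.
Qed.

Lemma dist_int_intB m a : dist_int (m%:~R - a) = dist_int a.
Proof.
have [n [s [s_itv ->]]] := nearest_decomp a; have s_le := norm_le_half s_itv.
have -> : m%:~R - (n%:~R + s) = (m - n)%:~R + - s :> R by rewrite intrB; lra.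
by rewrite !dist_intE ?normrN.
Qed.

Lemma dist_int_norm a : dist_int `|a| = dist_int a.
Proof.
have [a_ge0|a_lt0] := leP 0 a; first by rewrite ger0_norm.
by rewrite ltr0_norm // -[RHS](dist_int_intB 0) sub0r.
Qed.

Lemma dilateE l m s : - 2^-1 <= s < 2^-1 ->
  dilate l (m%:~R + s) = m%:~R + (if s == - 2^-1 then s else l * s).
Proof.
move=> s_itv; have s_le := norm_le_half s_itv.
rewrite /dilate /anchor dist_intE // nearest_intE //.
have [->|s_neq] := eqVneq s (- 2^-1).
  by rewrite normrN ger0_norm ?eqxx ?subrr ?mulr0 ?addr0; lra.
case: eqP => [/eqP|_]; last by rewrite addrAC subrr add0r.
by rewrite eqr_norml => /andP[/orP[] /eqP]; lra.
Qed.

Lemma dilate_int l m : dilate l m%:~R = m%:~R.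
Proof.
rewrite -[m%:~R]addr0 dilateE; last by apply/andP; split; lra.
by case: eqP => _; rewrite ?mulr0.
Qed.

Lemma dilate_intB l m a : dilate l (m%:~R - a) = m%:~R - dilate l a.
Proof.
have [n [s [s_itv ->]]] := nearest_decomp a; have /andP[s_ge s_lt] := s_itv.
rewrite [dilate l (n%:~R + s)]dilateE //; have [->|s_neq] := eqVneq s (- 2^-1).
  have -> : m%:~R - (n%:~R + - 2^-1) = (m - n + 1)%:~R + - 2^-1 :> R.
    by rewrite intrD intrB; lra.
  rewrite dilateE ?eqxx ?intrD ?intrB; lra.
have s_gt : - 2^-1 < s by rewrite lt_def s_neq s_ge.
have -> : m%:~R - (n%:~R + s) = (m - n)%:~R + - s :> R by rewrite intrB; lra.
rewrite dilateE; last by apply/andP; split; lra.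
have -> : (- s == - 2^-1) = false by rewrite eqr_opp lt_eqF.
rewrite intrB; lra.
Qed.

Lemma dilate_near l m s : 0 <= l -> - 2^-1 <= s < 2^-1 -> dilatable l (m%:~R + s) ->
  `|dilate l (m%:~R + s) - m%:~R| <= 2^-1.
Proof.
move=> l_ge0 s_itv dil; have /andP[s_ge s_lt] := s_itv.
rewrite dilateE // addrAC subrr add0r.
case: eqP => [->|/eqP s_neq]; first by rewrite normrN ger0_norm; lra.
have s_lt' : `|s| < 2^-1.
  by rewrite ltr_norml; apply/andP; split; rewrite // lt_def s_neq s_ge.
move: dil; rewrite /dilatable dist_intE ?(ltW s_lt') // => /(_ s_lt').
by rewrite normrM (ger0_norm l_ge0).
Qed.

Lemma dilate_mono l a b : 0 <= l -> dilatable l a -> dilatable l b -> a <= b ->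
  dilate l a <= dilate l b.
Proof.
move=> l_ge0; have [m [s [s_itv ->]]] := nearest_decomp a.
have [n [t [t_itv ->]]] := nearest_decomp b.
move=> dil_a dil_b ab; have /andP[s_ge s_lt] := s_itv; have /andP[t_ge t_lt] := t_itv.
move: (dilate_near _ _ _ l_ge0 s_itv dil_a) (dilate_near _ _ _ l_ge0 t_itv dil_b).
rewrite !ler_norml => /andP[a_lo a_hi] /andP[b_lo b_hi].
have m_le_n : m <= n by rewrite -ltzD1 -(ltr_int R) intrD; lra.
have [m_lt_n|n_le_m] := ltP m n.
  by move: m_lt_n; rewrite -lezD1 -(ler_int R) intrD; lra.
have m_eq_n : m = n by apply/le_anti; rewrite m_le_n n_le_m.
move: a_lo b_lo; subst n; rewrite !dilateE //.
case: eqP => [s_eq|/eqP s_neq]; first lra.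
have s_gt : - 2^-1 < s by rewrite lt_def s_neq s_ge.
case: eqP => [t_eq|_]; first lra.
move=> _ _; rewrite lerD2l; apply: ler_wpM2l => //; lra.
Qed.

Lemma dilatable0 a : dilatable 0 a.
Proof. by rewrite /dilatable mul0r => _; lra. Qed.

Lemma dilatable_int l m : dilatable l m%:~R.
Proof. by rewrite /dilatable -[m%:~R]addr0 dist_intE normr0 ?mulr0 //; lra. Qed.

Lemma dilateN l a : dilate l (- a) = - dilate l a.
Proof. by have := dilate_intB l 0 a; rewrite mulr0z !sub0r. Qed.

Lemma dilate_norm l a : 0 <= l -> dilatable l a -> dilate l `|a| = `|dilate l a|.
Proof.
move=> l_ge0 dil_a.
have dil0 := dilatable_int l 0; rewrite mulr0z in dil0.
have dilate0 := dilate_int l 0; rewrite mulr0z in dilate0.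
have [a_ge0|a_lt0] := leP 0 a.
  by rewrite !ger0_norm // -dilate0 dilate_mono.
by rewrite ltr0_norm // dilateN ler0_norm // -dilate0 dilate_mono // ltW.
Qed.

Lemma dilatable_max l a b : dilatable l a -> dilatable l b -> dilatable l (Num.max a b).
Proof. by case: leP. Qed.

Lemma dilate_max l a b : 0 <= l -> dilatable l a -> dilatable l b ->
  dilate l (Num.max a b) = Num.max (dilate l a) (dilate l b).
Proof.
move=> l_ge0 dil_a dil_b.
case: (leP a b) => ab; first by rewrite !max_r // dilate_mono.
by rewrite !max_l // dilate_mono // ltW.
Qed.

Section BigMax.
Variables (I : Type) (F : I -> R) (l : R).
Hypothesis dil_F : forall i, dilatable l (F i).

Lemma dilatable_bigmax r : dilatable l (\big[Num.max/0]_(i <- r) F i).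
Proof.
elim/big_ind: _ => //; last exact: dilatable_max.
by have := dilatable_int l 0; rewrite mulr0z.
Qed.

Lemma dilate_bigmax r : 0 <= l ->
  dilate l (\big[Num.max/0]_(i <- r) F i) = \big[Num.max/0]_(i <- r) dilate l (F i).
Proof.
move=> l_ge0; elim: r => [|i s IH]; first by rewrite !big_nil -(mulr0z 1) dilate_int.
by rewrite !big_cons dilate_max ?IH //; exact: dilatable_bigmax.
Qed.
End BigMax.

Lemma dilate_id l a : dist_int a = 2^-1 -> dilate l a = a.
Proof. by rewrite /dilate /anchor => ->; rewrite eqxx subrr mulr0 addr0. Qed.

Lemma dist_int_dilate l a : 0 <= l -> dilatable l a -> dist_int a < 2^-1 ->
  dist_int (dilate l a) = l * dist_int a.
Proof.
move=> l_ge0; have [m [s [s_itv ->]]] := nearest_decomp a; move=> dil_a.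
have s_le := norm_le_half s_itv.
have := dilate_near _ _ _ l_ge0 s_itv dil_a.
rewrite dist_intE // dilateE // addrAC subrr add0r.
case: eqP => [->|_ ls_le _]; first by rewrite normrN ger0_norm; lra.
by rewrite dist_intE // normrM ger0_norm.
Qed.

Lemma half_integer_of_dist_int a : ~~ (0 < dist_int a < 2^-1) -> exists k : int, a = k%:~R / 2.
Proof.
have [m [s [s_itv ->]]] := nearest_decomp a; have s_le := norm_le_half s_itv.
rewrite dist_intE // negb_and -!leNgt normr_le0.
case/orP => [/eqP -> | s_ge_half].
  by exists (m + m); rewrite intrD; lra.
have s_eq : s = - 2^-1.
  by move: s_ge_half; rewrite ler_normr => /orP[]; lra.
by exists (m + m - 1); rewrite s_eq !intrD; lra.
Qed.
End NearestInteger.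

Section Rounding.
Context {R : realType} {d : nat} (C : seq ('I_d -> int)).
Implicit Types (l : R) (c : 'I_d -> R).

Lemma eq_cost c c' : c =1 c' -> cost C c = cost C c'.
Proof.
by move=> cc'; apply: eq_bigr => x _; apply: eq_bigr => i _; rewrite cc'.
Qed.

Lemma dist_inf_dilate l c x : 0 <= l -> (forall i, dilatable l (c i)) ->
  dist_inf (intvec R x) (dilate l \o c) = dilate l (dist_inf (intvec R x) c).
Proof.
move=> l_ge0 dil_c; rewrite /dist_inf dilate_bigmax //; last first.
  by move=> i; rewrite /dilatable dist_int_norm dist_int_intB; exact: dil_c.
apply: eq_bigr => i _; rewrite dilate_norm // ?dilate_intB //.
by rewrite /dilatable dist_int_intB; exact: dil_c.
Qed.

Lemma cost_dilateE l c : 0 <= l -> (forall i, dilatable l (c i)) ->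
  cost C (dilate l \o c) = \sum_(x <- C) dilate l (dist_inf (intvec R x) c).
Proof. by move=> l_ge0 dil_c; apply: eq_bigr => x _; exact: dist_inf_dilate. Qed.

Lemma cost_dilate_affine l c : 0 <= l -> (forall i, dilatable l (c i)) ->
  cost C (dilate l \o c) =
    cost C (dilate 0 \o c) + l * (cost C c - cost C (dilate 0 \o c)).
Proof.
move=> l_ge0 dil_c; rewrite !cost_dilateE // => [|i]; last exact: dilatable0.
rewrite /cost -sumrB mulr_sumr -big_split; apply: eq_bigr => x _.
by rewrite /dilate mul0r addr0.
Qed.

Definition non_half_coords c : {set 'I_d} := [set i | 0 < dist_int (c i) < 2^-1].

Lemma half_integral_non_half_coords0 c : non_half_coords c = set0 -> half_integral c.
Proof.
move=> c0 i; apply: half_integer_of_dist_int; apply/negP => ci.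
by have := in_set0 i; rewrite -c0 inE ci.
Qed.

Lemma non_half_coords_dilate l c : 0 <= l -> (forall i, dilatable l (c i)) ->
  non_half_coords (dilate l \o c) \subset non_half_coords c.
Proof.
move=> l_ge0 dil_c; apply/subsetP => i; rewrite !inE /=.
have [ci_lt|ci_ge] := ltP (dist_int (c i)) 2^-1; last first.
  have ci_eq : dist_int (c i) = 2^-1 by apply/le_anti; rewrite ci_ge dist_int_le_half.
  by rewrite dilate_id // ci_eq ltxx andbF.
rewrite dist_int_dilate // => /andP[lci_gt0 _]; apply/andP; split => //.
have := normr_ge0 (c i - (nearest_int (c i))%:~R); rewrite -/(dist_int (c i)).
nra.
Qed.

Lemma reduce_non_half_coords c i0 : i0 \in non_half_coords c ->
  exists c', cost C c' <= cost C c /\ non_half_coords c' \proper non_half_coords c.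
Proof.
move=> i0_in.
case: (arg_maxP (fun i => dist_int (c i)) i0_in) => i1 i1_in i1_max.
set g := dist_int (c i1) in i1_max *.
have /andP[g_gt0 g_lt] : 0 < g < 2^-1.
  by have : i1 \in non_half_coords c := i1_in; rewrite inE.
pose L := (2 * g)^-1.
have L_ge1 : 1 <= L by rewrite invf_ge1; lra.
have Lg : L * g = 2^-1 by rewrite /L; field; lra.
have dil_L j : dilatable L (c j).
  move=> cj_lt; rewrite -Lg ler_wpM2l //; first lra.
  have [j_in|j_out] := boolP (j \in non_half_coords c); first exact: i1_max.
  move: j_out; rewrite inE cj_lt andbT -leNgt; lra.
(* The cost is affine in the factor and equals [cost C c] at factor 1 <= L. *)
have [l [l_ge0 dil_l cost_le lg]] : exists l, [/\ 0 <= l, forall j, dilatable l (c j),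
    cost C (dilate l \o c) <= cost C c & (l * g == 0) || (l * g == 2^-1)].
  have [le0|gt0] := leP (cost C (dilate 0 \o c)) (cost C c).
    by exists 0; split => // [j|]; [exact: dilatable0 | rewrite mul0r eqxx].
  exists L; split; rewrite ?Lg ?eqxx ?orbT //; first lra.
  rewrite cost_dilate_affine //; first nra; lra.
exists (dilate l \o c); split => //.
apply/properP; split; first exact: non_half_coords_dilate.
exists i1 => //; rewrite inE /= dist_int_dilate // -/g.
by case/orP: lg => /eqP ->; rewrite ltxx ?andbF.
Qed.

Lemma exists_half_integral_le c : exists c', half_integral c' /\ cost C c' <= cost C c.
Proof.
have [n] := ubnP #|non_half_coords c|; elim: n c => // n IH c; rewrite ltnS => c_size.
have [c0|[i0 i0_in]] := set_0Vmem (non_half_coords c).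
  by exists c; split; [exact: half_integral_non_half_coords0 |].
have [c' [c'_le c'_proper]] := reduce_non_half_coords _ _ i0_in.
have [c'' [c''_half c''_le]] := IH c' (leq_trans (proper_card c'_proper) c_size).
by exists c''; split => //; exact: le_trans c'_le.
Qed.
End Rounding.

Section Clamp.
Context {R : realType}.
Implicit Types (M a x : R).

Definition clamp M a : R := Num.max (- M) (Num.min a M).

Lemma clamp_cases M a : 0 <= M ->
  [\/ clamp M a = - M /\ a < - M, clamp M a = a /\ - M <= a <= M | clamp M a = M /\ M < a].
Proof.
move=> M_ge0; rewrite /clamp; case: (leP a M) => [a_le|a_gt].
  by case: (leP (- M) a) => [a_ge|a_lt]; [constructor 2; split => //; apply/andP | constructor 1].
by rewrite max_r; [constructor 3 | lra].
Qed.

Lemma clamp_dist M x a : `|x| <= M -> `|x - clamp M a| <= `|x - a|.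
Proof.
move=> x_le; have M_ge0 : 0 <= M := le_trans (normr_ge0 x) x_le.
move: x_le; rewrite ler_norml => /andP[x_ge x_le].
case: (clamp_cases _ a M_ge0) => [[-> a_lt]|[-> _]|[-> a_gt]] //.
  by rewrite !ger0_norm; lra.
by rewrite !ler0_norm; lra.
Qed.

Lemma clamp_norm_le M a : 0 <= M -> `|clamp M a| <= M.
Proof.
move=> M_ge0; rewrite ler_norml.
by case: (clamp_cases _ a M_ge0) => [[-> _]|[-> ?]|[-> _]] //; apply/andP; split; lra.
Qed.

Lemma clamp_half_integer (M : nat) a : (exists k : int, a = k%:~R / 2) ->
  exists k : int, clamp M%:R a = k%:~R / 2.
Proof.
move=> a_half; case: (clamp_cases _ a (ler0n R M)) => [[-> _]|[-> _]|[-> _]] //.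
  by exists (- (2 * M)%:Z); rewrite mulrNz PoszM intrM; lra.
by exists (2 * M)%:Z; rewrite PoszM intrM; lra.
Qed.
End Clamp.

Section HalfGrid.
Context {R : realType} {d : nat} (M : nat).

Definition half_grid (f : {ffun 'I_d -> 'I_(4 * M).+1}) : 'I_d -> R :=
  fun i => ((f i)%:Z - (2 * M)%:Z)%:~R / 2.

Lemma half_grid_half_integral f : half_integral (half_grid f).
Proof. by move=> i; eexists. Qed.

Lemma half_grid_surj (c : 'I_d -> R) : half_integral c -> (forall i, `|c i| <= M%:R) ->
  exists f, half_grid f =1 c.
Proof.
move=> c_half c_le; have [k ck] := fin_all_exists c_half.
have k_le i : `|k i| <= (2 * M)%:Z.
  rewrite -(ler_int R) intr_norm PoszM intrM -!pmulrn; move: (c_le i).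
  by rewrite ck normrM [`|2^-1|]ger0_norm; lra.
exists [ffun i => inord (absz (k i + (2 * M)%:Z))] => i.
have := k_le i; rewrite /half_grid ffunE => ki_le.
rewrite inordK ?ck; last by lia.
by congr (_%:~R / 2); lia.
Qed.
End HalfGrid.

Lemma exists_coord_bound {d : nat} (C : seq ('I_d -> int)) :
  exists M : nat, all (fun x => [forall i, `|x i| <= M]%N) C.
Proof.
elim: C => [|x C [M C_le]]; first by exists 0%N.
exists (maxn (\max_(i < d) `|x i|) M); apply/andP; split.
  by apply/forallP => i; rewrite leq_max (@leq_bigmax _ (fun i => `|x i|%N)).
by apply: sub_all C_le => y /forallP y_le; apply/forallP => i; rewrite leq_max y_le orbT.
Qed.

Lemma cost_clamp {R : realType} {d : nat} (C : seq ('I_d -> int)) (M : nat) (c : 'I_d -> R) :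
  all (fun x => [forall i, `|x i| <= M]%N) C -> cost C (clamp M%:R \o c) <= cost C c.
Proof.
rewrite /cost; elim: C => [|x C IH] /=; first by rewrite !big_nil.
case/andP => /forallP x_le C_le; rewrite !big_cons lerD ?IH //.
apply: le_bigmax2 => i _; apply: clamp_dist.
by rewrite /intvec -intr_norm -abszE -pmulrn ler_nat; exact: x_le.
Qed.

Theorem claim8 (R : realType) (d : nat) (C : seq ('I_d -> int)) :
  exists c : 'I_d -> R,
    half_integral c /\ (forall c' : 'I_d -> R, cost C c <= cost C c').
Proof.
have [M C_bounded] := exists_coord_bound C.
pose best := [arg min_(f < [ffun=> ord0]) cost C (half_grid M f : 'I_d -> R)]%O.
exists (half_grid M best); split; first exact: half_grid_half_integral.
move=> c; have [c1 [c1_half c1_le]] := exists_half_integral_le C c.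
have [f f_c1] : exists f, half_grid M f =1 clamp M%:R \o c1.
  apply: half_grid_surj => i; last exact/clamp_norm_le/ler0n.
  exact/clamp_half_integer/c1_half.
rewrite /best; case: arg_minP => // g _ g_min.
rewrite (le_trans (g_min f isT)) // (eq_cost C _ _ f_c1).
exact: le_trans (cost_clamp _ _ c1 C_bounded) c1_le.
Qed.
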